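(* Let $\mathbb{F}$ be any field of characteristic zero, let $G=\langle S\rangle\le\mathrm{GL}(n,\mathbb{F})$ with $S$ finite, let $R$ be the subring of $\mathbb{F}$ generated by the entries of the matrices in $S\cup S^{-1}$, and let $\psi_\rho$ be an SW-homomorphism on $\mathrm{GL}(n,R)$. Then $G$ is central-by-finite if and only if $G_\rho$ is central in $G$.
   Context: For an ideal $\rho$ of $R$, $\psi_\rho:\mathrm{GL}(n,R)\to\mathrm{GL}(n,R/\rho)$ is the homomorphism induced by the natural projection $R\to R/\rho$, and $G_\rho$ is the kernel of $\psi_\rho$ on $G$. $\psi_\rho$ is an SW-homomorphism if $R/\rho$ is finite (so $\psi_\rho$ has finite image) and every element of finite order in the kernel of $\psi_\rho$ on $\mathrm{GL}(n,R)$ is unipotent. $G$ is central-by-finite if its centre has finite index in $G$. *)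

From HB Require Import structures.
From mathcomp Require Import all_boot all_order all_algebra.
Set Implicit Arguments. Unset Strict Implicit. Unset Printing Implicit Defensive.
Import Order.TTheory GRing.Theory Num.Theory.
Local Open Scope ring_scope.

Section Defs.
Variables (F : fieldType) (n : nat).
Implicit Types (S : seq 'M[F]_n) (g h : 'M[F]_n).

Inductive gen_group S : 'M[F]_n -> Prop :=
  | gg_one : gen_group S 1%:M
  | gg_gen g : g \in S -> gen_group S g
  | gg_inv g : gen_group S g -> gen_group S (invmx g)
  | gg_mul g h : gen_group S g -> gen_group S h -> gen_group S (g *m h).

Inductive gen_ring S : F -> Prop :=
  | gr_ent s i j : s \in S -> gen_ring S (s i j)
  | gr_ent_inv s i j : s \in S -> gen_ring S (invmx s i j)
  | gr_one : gen_ring S 1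
  | gr_opp x : gen_ring S x -> gen_ring S (- x)
  | gr_add x y : gen_ring S x -> gen_ring S y -> gen_ring S (x + y)
  | gr_mul x y : gen_ring S x -> gen_ring S y -> gen_ring S (x * y).

Definition is_ideal_of (R rho : F -> Prop) : Prop :=
  [/\ forall x, rho x -> R x,
      rho 0,
      forall x y, rho x -> rho y -> rho (x + y),
      forall x, rho x -> rho (- x) &
      forall r x, R r -> rho x -> rho (r * x)].

Definition finite_quotient (R rho : F -> Prop) : Prop :=
  exists reps : seq F, (forall c, c \in reps -> R c) /\
    forall r, R r -> exists2 c, c \in reps & rho (r - c).

Definition in_GL (R : F -> Prop) g : Prop :=
  g \in unitmx /\ (forall i j, R (g i j)) /\ (forall i j, R (invmx g i j)).

(* g lies in the kernel of psi_rho : GL(n,R) -> GL(n,R/rho). *)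
Definition in_ker_psi (rho : F -> Prop) g : Prop :=
  forall i j, rho (g i j - (1%:M : 'M[F]_n) i j).

Definition finite_order g : Prop := exists2 k, (0 < k)%N & g ^+ k = 1%:M.

Definition unipotent g : Prop := exists m, (g - 1%:M) ^+ m = 0.

Definition SW_hom (R rho : F -> Prop) : Prop :=
  finite_quotient R rho /\
  forall g, in_GL R g -> in_ker_psi rho g -> finite_order g -> unipotent g.

Definition centre (G : 'M[F]_n -> Prop) g : Prop :=
  G g /\ forall h, G h -> g *m h = h *m g.

Definition central_by_finite (G : 'M[F]_n -> Prop) : Prop :=
  exists reps : seq 'M[F]_n, (forall x, x \in reps -> G x) /\
    forall g, G g -> exists2 x, x \in reps & exists2 z, centre G z & g = x *m z.

Definition G_rho (G : 'M[F]_n -> Prop) (rho : F -> Prop) g : Prop :=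
  G g /\ in_ker_psi rho g.

Definition central_in (H G : 'M[F]_n -> Prop) : Prop :=
  forall h g, H h -> G g -> h *m g = g *m h.

End Defs.

From mathcomp Require Import all_boot all_order all_algebra.
From mathcomp Require Import boolp.
Import GRing.Theory.
Local Open Scope ring_scope.
Set Implicit Arguments. Unset Strict Implicit.

(* If the centre Z of G has finite index, the transfer of G into Z is a
   homomorphism to an abelian group that acts as z |-> z ^+ m on Z; since some
   power of every element lies in Z, every commutator has finite order.  For
   h in G_rho and g in G the commutator [h, g] also lies in G_rho, so it is
   unipotent, and a unipotent matrix of finite order is 1 in characteristic 0.
   Conversely, as R/rho is finite, sorting the matrices of G by the residues of
   their entries shows that G_rho has finite index in G; if it is central,
   G is central-by-finite. *)

Definition mx_in (T : Type) m p (P : T -> Prop) (A : 'M[T]_(m, p)) :=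
  forall i j, P (A i j).

Definition commmx (R : comUnitRingType) n (x y : 'M[R]_n) :=
  x *m y *m invmx x *m invmx y.

Lemma perm_big_comm (R : pzSemiRingType) (I : eqType) (s1 s2 : seq I)
    (F : I -> R) :
  {in s1 &, forall i j, GRing.comm (F i) (F j)} -> perm_eq s1 s2 ->
  \prod_(i <- s1) F i = \prod_(i <- s2) F i.
Proof.
elim: s1 s2 => [|x s1 IH] s2 cF pe; first by case: s2 pe => // y s2 /perm_size.
have x_s2 : x \in s2 by rewrite -(perm_mem pe) mem_head.
case/splitPr: x_s2 pe => s2a s2b pe; have pe' : perm_eq s1 (s2a ++ s2b).
  rewrite -(perm_cons x); apply: perm_trans pe _.
  by rewrite perm_sym -cat1s perm_catCA.
have cF' : {in s1 &, forall i j, GRing.comm (F i) (F j)}.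
  by apply: sub_in2 cF => i i_s1; rewrite in_cons i_s1 orbT.
have cx : GRing.comm (F x) (\prod_(i <- s2a) F i).
  rewrite big_seq; apply: commr_prod => i i_s2a; apply: cF; first exact: mem_head.
  by rewrite (perm_mem pe) mem_cat i_s2a.
by rewrite big_cons (IH _ cF' pe') !big_cat big_cons /= mulrA cx mulrA.
Qed.

Lemma invmxM (R : comUnitRingType) n (A B : 'M[R]_n) :
  A \in unitmx -> B \in unitmx -> invmx (A *m B) = invmx B *m invmx A.
Proof.
move=> uA uB; have uAB : A *m B \in unitmx by rewrite unitmx_mul uA uB.
have inv_AB : A *m B *m (invmx B *m invmx A) = 1%:M.
  by rewrite -mulmxA mulKVmx // mulmxV.
by rewrite -[LHS]mulmx1 -inv_AB mulmxA mulVmx // mul1mx.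
Qed.

Lemma invmxMKl (R : comUnitRingType) n (A B C : 'M[R]_n) :
  A \in unitmx -> B \in unitmx -> invmx (A *m B) *m (A *m C) = invmx B *m C.
Proof. by move=> uA uB; rewrite invmxM // -mulmxA mulKmx. Qed.

Lemma commmx_eq1 (R : comUnitRingType) n (x y : 'M[R]_n) :
  x \in unitmx -> y \in unitmx -> commmx x y = 1%:M -> x *m y = y *m x.
Proof.
move=> ux uy /(congr1 (mulmx^~ y)); rewrite mulmxKV // mul1mx.
by move/(congr1 (mulmx^~ x)); rewrite mulmxKV.
Qed.

Lemma unipotent_finite_order_eq1 (F : fieldType) n (c : 'M[F]_n) :
  [pchar F] =i pred0 -> finite_order c -> unipotent c -> c = 1%:M.
Proof.
move=> charF0 [k k_gt0 ck1] [m Nm]; set N := c - 1%:M in Nm.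
have N_ann : N * \sum_(i < k) c ^+ i = 0 by rewrite /N -subrX1 ck1 subrr.
have N_lower j : N ^+ j.+2 = 0 -> N ^+ j.+1 = 0.
  move=> Nj2; have Njc i : N ^+ j.+1 * c ^+ i = N ^+ j.+1.
    elim: i => [|i IH]; first by rewrite mulr1.
    rewrite [c ^+ i.+1]exprSr mulrA IH -[c](subrK 1%:M) -/N.
    by rewrite mulrDr mulr1 -exprSr Nj2 add0r.
  (* [N ^+ j.+1] is killed by [\sum_(i < k) c ^+ i], on which it acts as [k]. *)
  have : N ^+ j.+1 *+ k = 0.
    rewrite -[k in _ *+ k]card_ord -sumr_const.
    under eq_bigr => i _ do rewrite -(Njc i).
    by rewrite -mulr_sumr exprSr -mulrA N_ann mulr0.
  move/eqP; rewrite -scaler_nat scaler_eq0 => /orP[|/eqP //].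
  by have /pcharf0P -> := charF0; rewrite eqn0Ngt k_gt0.
have N0 : N = 0.
  have : N ^+ m.+1 = 0 by rewrite exprSr Nm mul0r.
  elim: m {Nm} => [|m IH]; first by rewrite expr1.
  by move/N_lower/IH.
by apply/eqP; rewrite -subr_eq0 -/N N0.
Qed.

Lemma finite_class_reps (K : finType) (T : eqType) (P : T -> Prop)
    (C : K -> T -> Prop) :
  (forall x, P x -> exists k, C k x) ->
  exists reps : seq T, (forall r, r \in reps -> P r) /\
    forall x, P x -> exists2 r, r \in reps & exists k, C k x /\ C k r.
Proof.
move=> classP.
suff [reps [reps_sub reps_cover]] : exists reps : seq T,
    (forall r, r \in reps -> P r) /\
    forall k x, k \in enum K -> P x -> C k x -> exists2 r, r \in reps & C k r.
  exists reps; split=> // x Px; have [k Ckx] := classP x Px.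
  have [r r_reps Ckr] := reps_cover k x (mem_enum _ k) Px Ckx.
  by exists r => //; exists k.
elim: (enum K) => [|k s [reps [reps_sub reps_cover]]]; first by exists [::].
case: (pselect (exists y, P y /\ C k y)) => [[y [Py Cky]]|no_y].
  exists (y :: reps); split=> [r|l x].
    by rewrite in_cons => /predU1P[->|/reps_sub].
  rewrite in_cons => /predU1P[-> _ _|ls Px Clx]; first by exists y; rewrite ?mem_head.
  have [r r_reps Clr] := reps_cover l x ls Px Clx.
  by exists r; rewrite ?in_cons ?r_reps ?orbT.
exists reps; split=> // l x; rewrite in_cons => /predU1P[-> Px Ckx|].
  by case: no_y; exists x.
exact: reps_cover.
Qed.

Section MatrixIdeal.
Variables (F : fieldType) (R rho : F -> Prop).
Hypothesis rho_ideal : is_ideal_of R rho.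

Lemma mx_idealD m p (A B : 'M[F]_(m, p)) :
  mx_in rho A -> mx_in rho B -> mx_in rho (A + B).
Proof. by case: rho_ideal => _ _ rhoD _ _ rA rB i j; rewrite mxE; apply: rhoD. Qed.

Lemma mx_idealN m p (A : 'M[F]_(m, p)) : mx_in rho A -> mx_in rho (- A).
Proof. by case: rho_ideal => _ _ _ rhoN _ rA i j; rewrite mxE; apply: rhoN. Qed.

Lemma mx_idealB m p (A B : 'M[F]_(m, p)) :
  mx_in rho A -> mx_in rho B -> mx_in rho (A - B).
Proof. by move=> rA rB; apply: mx_idealD rA (mx_idealN rB). Qed.

Lemma mx_idealMl m p q (A : 'M[F]_(m, p)) (B : 'M[F]_(p, q)) :
  mx_in R A -> mx_in rho B -> mx_in rho (A *m B).
Proof.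
case: rho_ideal => _ rho0 rhoD _ rhoM RA rB i j; rewrite mxE.
by apply: big_ind => // l _; apply: rhoM.
Qed.

Lemma mx_idealMr m p q (A : 'M[F]_(m, p)) (B : 'M[F]_(p, q)) :
  mx_in rho A -> mx_in R B -> mx_in rho (A *m B).
Proof.
case: rho_ideal => _ rho0 rhoD _ rhoM rA RB i j; rewrite mxE.
by apply: big_ind => // l _; rewrite mulrC; apply: rhoM.
Qed.

Variable n : nat.
Implicit Types g h x : 'M[F]_n.

Lemma in_ker_psiE g : in_ker_psi rho g <-> mx_in rho (g - 1%:M).
Proof.
have E i j : (g - 1%:M) i j = g i j - (1%:M : 'M[F]_n) i j by rewrite !mxE.
by split=> kg i j; [rewrite E | rewrite -E]; apply: kg.
Qed.

Lemma ker_psi_commmx g h :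
  in_GL R g -> in_GL R h -> in_ker_psi rho h -> in_ker_psi rho (commmx h g).
Proof.
move=> [ug [Rg Rg']] [uh [Rh Rh']] /in_ker_psiE kh; apply/in_ker_psiE.
have -> : commmx h g - 1%:M = (h - 1%:M) *m g *m invmx h *m invmx g
                               - g *m (invmx h *m ((h - 1%:M) *m invmx g)).
  rewrite /commmx !(mulmxBl, mulmxBr) !mul1mx ?mulmx1 !mulmxA.
  by rewrite (mulmxKV uh) mulmxV // opprB addrA subrK.
apply: mx_idealB; first by do 3!apply: mx_idealMr => //.
by apply: mx_idealMl Rg _; apply: mx_idealMl Rh' _; apply: mx_idealMr.
Qed.

Lemma ker_psi_coset x g :
  in_GL R x -> mx_in rho (g - x) -> in_ker_psi rho (invmx x *m g).
Proof.
move=> [ux [_ Rx']] rgx; apply/in_ker_psiE.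
by rewrite -(mulVmx ux) -mulmxBr; apply: mx_idealMl.
Qed.

Lemma ker_psi_finite_index (G : 'M[F]_n -> Prop) :
  finite_quotient R rho -> (forall g, G g -> mx_in R g) ->
  exists reps : seq 'M[F]_n, (forall x, x \in reps -> G x) /\
    forall g, G g -> exists2 x, x \in reps & mx_in rho (g - x).
Proof.
case=> res [_ res_cover] G_R; case: rho_ideal => _ _ rhoD rhoN _.
pose residues_at (p : {ffun 'I_n * 'I_n -> 'I_(size res)}) g :=
  forall i j, rho (g i j - res`_(p (i, j))).
have [|reps [reps_sub reps_cover]] := @finite_class_reps _ _ G residues_at.
  move=> g Gg.
  have entry_class ij : exists l : 'I_(size res), rho (g ij.1 ij.2 - res`_l).
    have [c c_res gc] := res_cover _ (G_R g Gg ij.1 ij.2).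
    have c_idx : (index c res < size res)%N by rewrite index_mem.
    by exists (Ordinal c_idx); rewrite /= nth_index.
  have [u uP] := fin_all_exists entry_class.
  by exists (finfun u) => i j; rewrite ffunE; apply: (uP (i, j)).
exists reps; split=> // g Gg; have [x x_reps [p [pg px]]] := reps_cover g Gg.
exists x => // i j; rewrite !mxE.
have := rhoD _ _ (pg i j) (rhoN _ (px i j)).
by rewrite opprB addrA subrK.
Qed.

End MatrixIdeal.

Section Transfer.
Variables (F : fieldType) (n : nat) (G : 'M[F]_n -> Prop).
Hypotheses (G1 : G 1%:M) (GM : forall x y, G x -> G y -> G (x *m y))
  (GV : forall x, G x -> G (invmx x)) (GU : forall x, G x -> x \in unitmx).
Local Notation Z := (centre G).
Implicit Types x y z g h t : 'M[F]_n.

Lemma centre1 : Z 1%:M.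
Proof. by split=> // h _; rewrite mul1mx mulmx1. Qed.

Lemma centreM z w : Z z -> Z w -> Z (z *m w).
Proof.
move=> [Gz cz] [Gw cw]; split=> [|h Gh]; first exact: GM.
by rewrite -mulmxA cw // !mulmxA cz.
Qed.

Lemma centre_comm z w : Z z -> Z w -> z *m w = w *m z.
Proof. by move=> [_ cz] [Gw _]; apply: cz. Qed.

Lemma exprG x e : G x -> G (x ^+ e).
Proof. by move=> Gx; elim: e => [|e IH]; rewrite ?expr0 ?exprS //; apply: GM. Qed.

Definition same_coset x y := Z (invmx x *m y).

Lemma same_coset_sym x y : G x -> G y -> same_coset x y -> same_coset y x.
Proof.
move=> Gx Gy [Gxy cxy]; have uxy : invmx x *m y \in unitmx.
  by rewrite unitmx_mul unitmx_inv !GU.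
split=> [|h Gh]; first exact: GM (GV Gy) Gx.
have <- : invmx (invmx x *m y) = invmx y *m x.
  by rewrite invmxM ?unitmx_inv ?GU ?invmxK.
by apply: (canRL (mulmxK uxy)); rewrite -mulmxA -cxy // mulmxA mulVmx ?mul1mx.
Qed.

Lemma same_coset_trans x y w :
  G y -> same_coset x y -> same_coset y w -> same_coset x w.
Proof. by move=> Gy xy yw; have := centreM xy yw; rewrite !mulmxA mulmxK ?GU. Qed.

Section Cover.
Variable r : seq 'M[F]_n.
Hypotheses (r_sub : forall x, x \in r -> G x)
  (r_cover : forall g, G g -> exists2 x, x \in r & exists2 z, Z z & g = x *m z).

Definition rep x := nth 1%:M r (find (fun t => `[< same_coset t x >]) r).

Lemma rep_spec x : G x -> rep x \in r /\ same_coset (rep x) x.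
Proof.
move=> Gx; have has_x : has (fun t => `[< same_coset t x >]) r.
  have [t t_r [z Zz ->]] := r_cover Gx.
  apply/hasP; exists t => //; apply/asboolP.
  by rewrite /same_coset mulKmx // GU //; apply: r_sub.
by split; [rewrite /rep mem_nth // -has_find | apply/asboolP/(nth_find 1%:M has_x)].
Qed.

Lemma repG x : G x -> G (rep x).
Proof. by case/rep_spec=> /r_sub. Qed.

Lemma rep_eq x y : G x -> G y -> same_coset x y -> rep x = rep y.
Proof.
move=> Gx Gy xy; rewrite /rep; congr nth; apply: eq_find => t.
apply/asboolP/asboolP => [tx | ty]; first exact: same_coset_trans Gx tx xy.
exact: same_coset_trans Gy ty (same_coset_sym Gx Gy xy).
Qed.

Lemma same_coset_rep x y : G x -> G y -> rep x = rep y -> same_coset x y.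
Proof.
move=> Gx Gy Exy; have [_ xx] := rep_spec Gx; have [_ yy] := rep_spec Gy.
rewrite Exy in xx; have Gry := repG Gy.
exact: same_coset_trans Gry (same_coset_sym Gry Gx xx) yy.
Qed.

Lemma repK x : G x -> rep (rep x) = rep x.
Proof. by move=> Gx; apply: rep_eq (repG Gx) Gx (rep_spec Gx).2. Qed.

Definition transversal := undup (map rep r).

Lemma rep_transversal x : G x -> rep x \in transversal.
Proof.
move=> Gx; rewrite mem_undup; apply/mapP.
by exists (rep x); [case: (rep_spec Gx) | rewrite repK].
Qed.

Lemma transversalP t : t \in transversal -> G t /\ rep t = t.
Proof.
by rewrite mem_undup => /mapP[x /r_sub Gx ->]; split; [apply: repG | apply: repK].
Qed.

Lemma size_transversal_gt0 : (0 < size transversal)%N.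
Proof. by case: transversal (rep_transversal G1). Qed.

Lemma perm_rep_mull h :
  G h -> perm_eq (map (fun t => rep (h *m t)) transversal) transversal.
Proof.
move=> Gh; have rep_hT_inj :
    {in transversal &, injective (fun t => rep (h *m t))}.
  move=> t u tT uT /= Etu.
  have [[Gt <-] [Gu <-]] := (transversalP tT, transversalP uT).
  apply: rep_eq => //; have := same_coset_rep (GM Gh Gt) (GM Gh Gu) Etu.
  by rewrite /same_coset invmxMKl ?GU.
have uniq_hT : uniq (map (fun t => rep (h *m t)) transversal).
  by rewrite map_inj_in_uniq ?undup_uniq.
have sub_hT : {subset map (fun t => rep (h *m t)) transversal <= transversal}.
  by move=> _ /mapP[t /transversalP[Gt _] ->]; apply/rep_transversal/GM.
apply: uniq_perm (undup_uniq _) _ => //.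
by case: (uniq_min_size uniq_hT sub_hT) => //; rewrite size_map.
Qed.

Definition transfer_factor g t := invmx (rep (g *m t)) *m (g *m t).

Definition transfer g := \prod_(t <- transversal) transfer_factor g t.

Lemma centre_transfer_factor g t : G g -> G t -> Z (transfer_factor g t).
Proof. by move=> Gg Gt; case: (rep_spec (GM Gg Gt)). Qed.

Lemma transfer_factorM g h t : G g -> G h -> G t ->
  transfer_factor (g *m h) t
    = transfer_factor g (rep (h *m t)) *m transfer_factor h t.
Proof.
move=> Gg Gh Gt; have Ght := GM Gh Gt.
have rep_g_rep : rep (g *m rep (h *m t)) = rep (g *m h *m t).
  apply: rep_eq; [exact: GM (repG Ght) | by rewrite -mulmxA; apply: GM |].
  rewrite -mulmxA /same_coset invmxMKl ?GU //; [exact: (rep_spec Ght).2 | exact: repG].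
by rewrite /transfer_factor rep_g_rep -!mulmxA mulKVmx // GU //; apply: repG.
Qed.

Lemma centre_transfer g : G g -> Z (transfer g).
Proof.
move=> Gg; rewrite /transfer big_seq.
apply: big_ind => [|z w|t /transversalP[Gt _]]; first exact: centre1.
  exact: centreM.
exact: centre_transfer_factor.
Qed.

Lemma transferM g h : G g -> G h -> transfer (g *m h) = transfer g *m transfer h.
Proof.
move=> Gg Gh; rewrite /transfer big_seq.
rewrite (eq_bigr (fun t => transfer_factor g (rep (h *m t)) * transfer_factor h t));
  last by move=> t /transversalP[Gt _]; apply: transfer_factorM.
rewrite prodrM_comm -?big_seq; last first.
  move=> t u /transversalP[Gt _] /transversalP[Gu _].
  by apply: centre_comm; apply: centre_transfer_factor => //; apply/repG/GM.
congr (_ * _); rewrite -(big_map (fun t => rep (h *m t)) xpredT).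
apply: perm_big_comm (perm_rep_mull Gh) => _ _ /mapP[t tT ->] /mapP[u uT ->].
have [[Gt _] [Gu _]] := (transversalP tT, transversalP uT).
by apply: centre_comm; apply: centre_transfer_factor => //; apply/repG/GM.
Qed.

Lemma transfer_centre z : Z z -> transfer z = z ^+ size transversal.
Proof.
move=> Zz; have [Gz cz] := Zz.
rewrite /transfer big_seq (eq_bigr (fun=> z)) -?big_seq.
  by rewrite big_const_seq count_predT -Monoid.iteropE.
move=> t /transversalP[Gt rep_t]; rewrite /transfer_factor.
have -> : rep (z *m t) = t.
  rewrite -{2}rep_t; apply: rep_eq; [exact: GM | done |].
  apply: same_coset_sym => //; first exact: GM.
  by rewrite /same_coset cz // mulKmx ?GU.
by rewrite cz // mulKmx ?GU.
Qed.

Lemma transfer1 : transfer 1%:M = 1%:M.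
Proof. by rewrite transfer_centre ?expr1n //; apply: centre1. Qed.

Lemma transferX x e : G x -> transfer (x ^+ e) = transfer x ^+ e.
Proof.
move=> Gx; elim: e => [|e IH]; first by rewrite !expr0 transfer1.
rewrite !exprS transferM ?IH //; exact: exprG.
Qed.

Lemma transfer_commmx x y : G x -> G y -> transfer (commmx x y) = 1%:M.
Proof.
move=> Gx Gy; have [Gx' Gy'] := (GV Gx, GV Gy).
have inv_transfer w : G w -> transfer w *m transfer (invmx w) = 1%:M.
  by move=> Gw; have Gw' := GV Gw; rewrite -transferM // mulmxV ?transfer1 // GU.
have Gxy := GM Gx Gy; have Gxyx' := GM Gxy Gx'.
rewrite /commmx !transferM // -(mulmxA _ (transfer y)).
rewrite (centre_comm (centre_transfer Gy) (centre_transfer Gx')).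
by rewrite mulmxA inv_transfer // mul1mx inv_transfer.
Qed.

Lemma exists_expr_centre x : G x -> exists2 e, (0 < e)%N & Z (x ^+ e).
Proof.
move=> Gx; set s := map (fun i => rep (x ^+ i)) (iota 0 (size r).+1).
have s_sub : {subset s <= r}.
  by move=> _ /mapP[i _ ->]; case: (rep_spec (exprG i Gx)).
have /(uniqPn 1%:M) [i [j [lt_ij lt_js]]] : ~~ uniq s.
  by apply/negP => /uniq_leq_size /(_ s_sub); rewrite size_map size_iota ltnn.
rewrite size_map size_iota in lt_js; have lt_is := ltn_trans lt_ij lt_js.
rewrite !(nth_map 0%N) ?size_iota // !nth_iota // !add0n => E.
exists (j - i)%N; first by rewrite subn_gt0.
have := same_coset_rep (exprG i Gx) (exprG j Gx) E.
have -> : x ^+ j = x ^+ i *m x ^+ (j - i) by rewrite mulmxE -exprD subnKC // ltnW.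
by rewrite /same_coset mulKmx // GU //; apply: exprG.
Qed.

Lemma cover_commmx_finite_order x y : G x -> G y -> finite_order (commmx x y).
Proof.
move=> Gx Gy; have Gc : G (commmx x y) by do 3?apply: GM => //; apply: GV.
have [e e_gt0 Zce] := exists_expr_centre Gc.
exists (e * size transversal)%N; first by rewrite muln_gt0 e_gt0 size_transversal_gt0.
by rewrite exprM -transfer_centre // transferX // transfer_commmx // expr1n.
Qed.

End Cover.

Lemma central_by_finite_commmx_finite_order x y :
  central_by_finite G -> G x -> G y -> finite_order (commmx x y).
Proof.
by case=> r [r_sub r_cover]; apply: (@cover_commmx_finite_order r r_sub r_cover x y).
Qed.

End Transfer.

Section LinearGroup.
Variables (F : fieldType) (n : nat) (R rho : F -> Prop) (G : 'M[F]_n -> Prop).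
Hypotheses (rho_ideal : is_ideal_of R rho)
  (G1 : G 1%:M) (GM : forall x y, G x -> G y -> G (x *m y))
  (GV : forall x, G x -> G (invmx x)) (G_GL : forall g, G g -> in_GL R g).

Lemma central_ker_psi_of_central_by_finite :
  [pchar F] =i pred0 ->
  (forall g : 'M[F]_n,
     in_GL R g -> in_ker_psi rho g -> finite_order g -> unipotent g) ->
  central_by_finite G -> central_in (G_rho G rho) G.
Proof.
move=> charF0 SW Gcbf h g [Gh ker_h] Gg.
have GU x : G x -> x \in unitmx by case/G_GL.
have Gc : G (commmx h g) by do 3?apply: GM => //; apply: GV.
have c_fin := central_by_finite_commmx_finite_order G1 GM GV GU Gcbf Gh Gg.
have c_ker := ker_psi_commmx rho_ideal (G_GL Gg) (G_GL Gh) ker_h.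
have c1 := unipotent_finite_order_eq1 charF0 c_fin (SW _ (G_GL Gc) c_ker c_fin).
exact: commmx_eq1 (GU h Gh) (GU g Gg) c1.
Qed.

Lemma central_by_finite_of_central_ker_psi :
  finite_quotient R rho -> central_in (G_rho G rho) G -> central_by_finite G.
Proof.
move=> fin_quo central_ker.
have [|reps [reps_sub reps_cover]] :=
  ker_psi_finite_index rho_ideal fin_quo (G := G).
  by move=> g /G_GL[_ []].
exists reps; split=> // g Gg; have [x x_reps gx] := reps_cover g Gg.
have Gx := reps_sub x x_reps; have Gxg := GM (GV Gx) Gg.
exists x => //; exists (invmx x *m g); last by rewrite mulKVmx //; case: (G_GL Gx).
split=> // h Gh; apply: central_ker Gh; split=> //.
exact: (ker_psi_coset rho_ideal (G_GL Gx) gx).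
Qed.

End LinearGroup.

Lemma gen_ring0 (F : fieldType) n (S : seq 'M[F]_n) : gen_ring S 0.
Proof. by rewrite -(subrr 1); apply/gr_add/gr_opp/gr_one/gr_one. Qed.

Lemma gen_ring_mulmx (F : fieldType) n (S : seq 'M[F]_n) (A B : 'M[F]_n) :
  mx_in (gen_ring S) A -> mx_in (gen_ring S) B -> mx_in (gen_ring S) (A *m B).
Proof.
move=> RA RB i j; rewrite mxE.
by apply: big_ind => [||l _]; [apply: gen_ring0 | apply: gr_add | apply: gr_mul].
Qed.

Lemma gen_group_in_GL (F : fieldType) n (S : seq 'M[F]_n) g :
  (forall s, s \in S -> s \in unitmx) -> gen_group S g -> in_GL (gen_ring S) g.
Proof.
move=> S_unit; elim=> {g} [|s s_S|g _ [ug [Rg Rg']]|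
                            g h _ [ug [Rg Rg']] _ [uh [Rh Rh']]].
- have R1 : mx_in (gen_ring S) (1%:M : 'M[F]_n).
    by move=> i j; rewrite mxE; case: eqP => _; [apply: gr_one | apply: gen_ring0].
  by rewrite /in_GL invmx1 unitmx1.
- by split; [apply: S_unit | split=> i j; [apply: gr_ent | apply: gr_ent_inv]].
- by rewrite /in_GL unitmx_inv invmxK.
- split; first by rewrite unitmx_mul ug uh.
  by rewrite invmxM //; split; apply: gen_ring_mulmx.
Qed.

Theorem corollary5p8 (F : fieldType) (n : nat) (S : seq 'M[F]_n)
    (rho : F -> Prop) :
  [pchar F] =i pred0 ->
  (forall s, s \in S -> s \in unitmx) ->
  is_ideal_of (gen_ring S) rho ->
  SW_hom n (gen_ring S) rho ->
  (central_by_finite (gen_group S) <->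
   central_in (G_rho (gen_group S) rho) (gen_group S)).
Proof.
move=> charF0 S_unit rho_ideal [fin_quo SW].
have G_GL := gen_group_in_GL S_unit.
have G1 := gg_one S; have GM := @gg_mul _ _ S; have GV := @gg_inv _ _ S.
split.
- exact: (central_ker_psi_of_central_by_finite rho_ideal G1 GM GV G_GL charF0 SW).
- exact: (central_by_finite_of_central_ker_psi rho_ideal GM GV G_GL fin_quo).
Qed.
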